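(* Let $\mathcal{K}^\star_{loc}$, $\{k\}$ and $\mathcal{K}_{g,user}$ be pairwise disjoint finite sets of keyframes, with weighted undirected edges (weights $w_e\geq1$) among $\mathcal{K}^\star_{loc}\cup\{k\}$ and between $\mathcal{K}^\star_{loc}\cup\{k\}$ and $\mathcal{K}_{g,user}$, such that the graph on $\mathcal{K}^\star_{loc}\cup\{k\}$ is connected, and let $\mathcal{I}$ be a symmetric positive definite $6\times6$ matrix with $\det\mathcal{I}\geq1$. For $F\subseteq\mathcal{K}_{g,user}$ define $$g(F)=\log\det\big(\tilde{\mathcal{I}}_{loc}(\mathcal{K}^\star_{loc}\cup\{k\},F)\big).$$ Then $g$ is non-negative, monotone nondecreasing, and submodular on $2^{\mathcal{K}_{g,user}}$; in particular the problem $\max_{F\subseteq\mathcal{K}_{g,user},|F|\leq l_f}g(F)$ is the maximization of a non-negative monotone submodular function under a cardinality constraint.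
   Context: For disjoint keyframe sets $\mathcal{K}_{loc}=\{r_1,\dots,r_L\}$ (ordered) and $\mathcal{K}_{fixed}$, $\tilde{\mathcal{I}}_{loc}(\mathcal{K}_{loc},\mathcal{K}_{fixed})=\tilde{\mathbf{L}}_{loc}\otimes\mathcal{I}$, where $\mathbf{L}_{loc}$ is the $L\times L$ matrix with $[\mathbf{L}_{loc}]_{i,j}=-\sum_{e\text{ between }r_i,r_j}w_e$ for $i\neq j$ and $[\mathbf{L}_{loc}]_{i,i}=\sum w_e$ over all edges joining $r_i$ to another node of $\mathcal{K}_{loc}\cup\mathcal{K}_{fixed}$, and $\tilde{\mathbf{L}}_{loc}$ is $\mathbf{L}_{loc}$ with its first row and column deleted; $\otimes$ is the Kronecker product. A set function $g$ is submodular if $g(L)+g(S)\geq g(L\cup S)+g(L\cap S)$ for all subsets $L,S$. *)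

From HB Require Import structures.
From mathcomp Require Import all_boot all_order all_algebra.
From mathcomp Require Import mxtens.
From mathcomp Require Import reals exp.
Set Implicit Arguments. Unset Strict Implicit. Unset Printing Implicit Defensive.
Import Order.TTheory GRing.Theory Num.Theory.
Local Open Scope ring_scope.

(* Vertices: local keyframes K*_loc ∪ {k}, ordered as r_1,...,r_{n+1}
   (type 'I_n.+1, r_1 = ord0), and user keyframes (finite type U).
   Disjointness is built in via the sum type. *)
Definition vtx (n : nat) (U : finType) := ('I_n.+1 + U)%type.

Definition joins (n : nat) (U : finType) (E : finType)
  (ends : E -> vtx n U * vtx n U) (e : E) (x y : vtx n U) : bool :=
  (((ends e).1 == x) && ((ends e).2 == y)) || (((ends e).1 == y) && ((ends e).2 == x)).

Definition wsum (R : realType) (n : nat) (U E : finType)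
  (ends : E -> vtx n U * vtx n U) (w : E -> R) (x y : vtx n U) : R :=
  \sum_(e : E | joins ends e x y) w e.

Definition is_local (n : nat) (U : finType) (v : vtx n U) : bool :=
  if v is inl _ then true else false.

Definition in_locF (n : nat) (U : finType) (F : {set U}) (v : vtx n U) : bool :=
  match v with inl _ => true | inr u => u \in F end.

Definition Lloc (R : realType) (n : nat) (U E : finType)
  (ends : E -> vtx n U * vtx n U) (w : E -> R) (F : {set U}) : 'M[R]_(n.+1) :=
  \matrix_(i, j)
    if i == j then \sum_(y : vtx n U | (y != inl i) && in_locF F y) wsum ends w (inl i) y
    else - wsum ends w (inl i) (inl j).

Definition Lloc_tilde (R : realType) (n : nat) (U E : finType)
  (ends : E -> vtx n U * vtx n U) (w : E -> R) (F : {set U}) : 'M[R]_n :=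
  \matrix_(i, j) Lloc ends w F (lift ord0 i) (lift ord0 j).

Definition Iloc_tilde (R : realType) (n : nat) (U E : finType)
  (ends : E -> vtx n U * vtx n U) (w : E -> R) (I : 'M[R]_6) (F : {set U})
  : 'M[R]_(n * 6) :=
  tensmx (Lloc_tilde ends w F) I.

Definition gfun (R : realType) (n : nat) (U E : finType)
  (ends : E -> vtx n U * vtx n U) (w : E -> R) (I : 'M[R]_6) (F : {set U}) : R :=
  ln (\det (Iloc_tilde ends w I F)).

Definition local_connected (n : nat) (U E : finType)
  (ends : E -> vtx n U * vtx n U) : Prop :=
  forall i j : 'I_n.+1,
    connect [rel a b : 'I_n.+1 | [exists e : E, joins ends e (inl a) (inl b)]] i j.

Definition submodular (U : finType) (R : realType) (g : {set U} -> R) : Prop :=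
  forall A B : {set U}, g (A :|: B) + g (A :&: B) <= g A + g B.

Definition monotone_nondecr (U : finType) (R : realType) (g : {set U} -> R) : Prop :=
  forall A B : {set U}, A \subset B -> g A <= g B.

Definition nonneg_fun (U : finType) (R : realType) (g : {set U} -> R) : Prop :=
  forall A : {set U}, 0 <= g A.

Definition sym_posdef (R : realType) (m : nat) (M : 'M[R]_m) : Prop :=
  M^T = M /\ forall v : 'rV[R]_m, v != 0 -> 0 < (v *m M *m v^T) 0 0.

From HB Require Import structures.
From mathcomp Require Import all_boot all_order all_algebra.
From mathcomp Require Import fingroup perm mxtens.
From mathcomp Require Import reals exp.
From mathcomp Require Import ring lra.
Set Implicit Arguments. Unset Strict Implicit. Unset Printing Implicit Defensive.
Import Order.TTheory GRing.Theory Num.Theory.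
Local Open Scope ring_scope.

(* Write L_F for the reduced Laplacian tilde L_loc(K_loc, F).  Since
   L_F (x) I = (L_F (x) 1_6)(1_n (x) I), we get
   g(F) = ln (det(L_F)^6 det(I)^n), so everything reduces to three facts on
   d(F) = det L_F: d >= 1, d is monotone, and d(A u B) d(A n B) <= d(A) d(B).

   L_F = sum_e kappa_F(e) b_e^T b_e is a sum of rank-one terms, with b_e the
   reduced incidence row of e and kappa_F(e) = w_e if both endpoints lie in
   K_loc u F (else 0).  As no edge joins two user keyframes, kappa is modular
   and monotone in F, so L_B - L_A is a positive semidefinite rank-one sum for
   A <= B and L_(A u B) = L_(A n B) + P + Q with P, Q such sums.

   Finally the graph part: L_F as a
   rank-one sum; the Laplacian of the local edges is positive definite by
   connectivity and has integer entries, so its determinant is >= 1. *)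

Section PositiveDefinite.
Variable R : realFieldType.

Definition qform m (Y : 'M[R]_m) (v : 'rV[R]_m) : R := (v *m Y *m v^T) 0 0.
Definition posdef m (Y : 'M[R]_m) : Prop :=
  forall v : 'rV[R]_m, v != 0 -> 0 < qform Y v.
Definition rank1 m (s : R) (u : 'rV[R]_m) : 'M[R]_m := s *: (u^T *m u).

Lemma mx11_mulE (a b : 'M[R]_1) : (a *m b) 0 0 = a 0 0 * b 0 0.
Proof. by rewrite mxE big_ord1. Qed.

Lemma mx11_trE (a : 'M[R]_1) : a^T 0 0 = a 0 0.
Proof. by rewrite mxE. Qed.

Lemma qformD m (Y P : 'M[R]_m) v : qform (Y + P) v = qform Y v + qform P v.
Proof. by rewrite /qform mulmxDr mulmxDl mxE. Qed.

Lemma qformZ m (c : R) (Y : 'M[R]_m) v : qform (c *: Y) v = c * qform Y v.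
Proof. by rewrite /qform -scalemxAr -scalemxAl mxE. Qed.

Lemma qform_sum m (I : Type) (r : seq I) (P : pred I) (F : I -> 'M[R]_m) v :
  qform (\sum_(i <- r | P i) F i) v = \sum_(i <- r | P i) qform (F i) v.
Proof.
have qform0 : qform 0 v = 0 by rewrite /qform mulmx0 mul0mx mxE.
exact: (big_morph (fun Y => qform Y v) (fun A B => qformD A B v) qform0).
Qed.

Lemma qform_rank1 m s (u v : 'rV[R]_m) :
  qform (rank1 s u) v = s * ((v *m u^T) 0 0) ^+ 2.
Proof.
rewrite /rank1 qformZ /qform !mulmxA -(mulmxA (v *m u^T)) mx11_mulE expr2.
by rewrite -[X in _ * (_ * X)]mx11_trE trmx_mul trmxK.
Qed.

Lemma qform_rank1_ge0 m s (u v : 'rV[R]_m) : 0 <= s -> 0 <= qform (rank1 s u) v.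
Proof. by move=> s_ge0; rewrite qform_rank1 mulr_ge0 // sqr_ge0. Qed.

(* Sylvester's identity for rank one: det (1 + x y) = 1 + y x, proved by
   conjugating a block matrix. *)
Lemma det_1_add_rank1 m (x : 'M[R]_(m, 1)) (y : 'M[R]_(1, m)) :
  \det (1%:M + x *m y) = 1 + (y *m x) 0 0.
Proof.
pose B1 := block_mx (1%:M : 'M[R]_m) 0 (- y) (1%:M : 'M_1).
pose B2 := block_mx (1%:M : 'M[R]_m) x 0 (1%:M + y *m x).
pose B3 := block_mx (1%:M + x *m y) x 0 (1%:M : 'M_1).
have conj : B1 *m B2 = B3 *m B1.
  rewrite !mulmx_block !mul1mx !mulmx1 !mul0mx !mulmx0 !add0r !addr0.
  by rewrite mulNmx mulmxN (addrC 1%:M (y *m x)) addKr addrK.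
have := congr1 determinant conj; rewrite !det_mulmx.
rewrite /B1 /B2 /B3 det_lblock !det_ublock !det1 !mul1r !mulr1.
by move=> <-; rewrite det_mx11 !mxE.
Qed.

Lemma det_add_rank1 m (Y : 'M[R]_m) s (u : 'rV[R]_m) : Y \in unitmx ->
  \det (Y + rank1 s u) = \det Y * (1 + s * qform (invmx Y) u).
Proof.
move=> uY.
have -> : Y + rank1 s u = Y *m (1%:M + (s *: (invmx Y *m u^T)) *m u).
  rewrite mulmxDr mulmx1 !mulmxA -scalemxAr mulmxA mulmxV //.
  by rewrite mul1mx /rank1 scalemxAl.
by rewrite det_mulmx det_1_add_rank1 /qform -scalemxAr mxE mulmxA.
Qed.

Lemma posdef_unit m (Y : 'M[R]_m) : posdef Y -> Y \in unitmx.
Proof.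
move=> pdY; rewrite unitmxE unitfE; apply/negP => /det0P [v v_neq0 vY].
by have := pdY v v_neq0; rewrite /qform vY mul0mx mxE ltxx.
Qed.

Lemma posdef_add_psd m (Y P : 'M[R]_m) :
  posdef Y -> (forall v, 0 <= qform P v) -> posdef (Y + P).
Proof. by move=> pdY psdP v v_neq0; rewrite qformD ltr_wpDr // pdY. Qed.

(* A principal minor of a positive definite matrix is positive definite:
   its quadratic form is that of Y on vectors with vanishing first entry. *)
Lemma posdef_minor m (Y : 'M[R]_m.+1) :
  posdef Y -> posdef (row' ord0 (col' ord0 Y)).
Proof.
move=> pdY v v_neq0; pose S := row' ord0 (1%:M : 'M[R]_m.+1).
have S_row A : S *m A = row' ord0 A.
  apply/matrixP=> i j; rewrite !mxE; under eq_bigr do rewrite !mxE.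
  rewrite (bigD1 (lift ord0 i)) //= eqxx mul1r big1 ?addr0 // => l.
  by rewrite eq_sym => /negbTE ->; rewrite mul0r.
have SST : S *m S^T = 1%:M.
  by rewrite S_row; apply/matrixP=> i j; rewrite !mxE eq_sym (inj_eq lift_inj).
have -> : row' ord0 (col' ord0 Y) = S *m Y *m S^T.
  rewrite -mulmxA S_row; apply/matrixP=> i j; rewrite !mxE.
  under eq_bigr do rewrite !mxE.
  rewrite (bigD1 (lift ord0 j)) //= eqxx mulr1 big1 ?addr0 // => l.
  by rewrite eq_sym => /negbTE ->; rewrite mulr0.
have -> : qform (S *m Y *m S^T) v = qform Y (v *m S).
  by rewrite /qform trmx_mul !mulmxA.
apply: pdY; apply: contra v_neq0 => /eqP vS0.
by rewrite -[v]mulmx1 -SST mulmxA vS0 mul0mx.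
Qed.

Lemma posdef_det_gt0 m (Y : 'M[R]_m) : posdef Y -> 0 < \det Y.
Proof.
elim: m Y => [|m IH] Y pdY; first by rewrite det_mx00.
have minor_gt0 := IH _ (posdef_minor pdY).
have detY_neq0 : \det Y != 0 by rewrite -unitfE -unitmxE posdef_unit.
pose e0 := delta_mx 0 (ord0 : 'I_m.+1) : 'rV[R]_m.+1.
have det_shift s : \det (Y + rank1 s e0) =
    \det Y + s * \det (row' ord0 (col' ord0 Y)).
  rewrite det_add_rank1 ?posdef_unit // /qform trmx_delta -rowE -colE.
  by rewrite !mxE /invmx posdef_unit // !mxE /cofactor /= expr0 mul1r; field.
case: (ltgtP (\det Y) 0) => // detY_lt0; last by rewrite detY_lt0 eqxx in detY_neq0.
pose s0 := - \det Y / \det (row' ord0 (col' ord0 Y)).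
have s0_ge0 : 0 <= s0 by rewrite divr_ge0 // ?oppr_ge0 ltW.
have pd0 : posdef (Y + rank1 s0 e0).
  by apply: posdef_add_psd => // v; apply: qform_rank1_ge0.
have := posdef_unit pd0; rewrite unitmxE unitfE det_shift /s0.
by rewrite divfK ?(gt_eqF minor_gt0) // subrr eqxx.
Qed.

Lemma invmx_add_rank1 m (Y : 'M[R]_m) s (u : 'rV[R]_m) : Y \in unitmx ->
  1 + s * qform (invmx Y) u != 0 ->
  invmx (Y + rank1 s u) = invmx Y - (s / (1 + s * qform (invmx Y) u)) *:
                          (invmx Y *m u^T *m (u *m invmx Y)).
Proof.
move=> uY nz; set Z := invmx Y; set a := qform Z u; set c := s / (1 + s * a).
set N := u^T *m u *m Z.
have uuZ : u^T *m u *m (Z *m u^T *m (u *m Z)) = a *: N.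
  have -> : u^T *m u *m (Z *m u^T *m (u *m Z)) =
            u^T *m (u *m Z *m u^T) *m (u *m Z) by rewrite !mulmxA.
  rewrite [u *m Z *m u^T]mx11_scalar mul_mx_scalar -scalemxAl.
  by rewrite /a /qform /N !mulmxA.
have YZ : Y *m (Z *m u^T *m (u *m Z)) = N.
  by rewrite !mulmxA mulmxV // mul1mx /N ?mulmxA.
have c_eq : c + c * (s * a) = s by rewrite /c; field.
have right_inv : (Y + rank1 s u) *m (Z - c *: (Z *m u^T *m (u *m Z))) = 1%:M.
  rewrite /rank1 mulmxDl !mulmxBr -!scalemxAr YZ -!scalemxAl uuZ mulmxV //.
  rewrite scalerA -/N scalerA -addrA -[in RHS](addr0 1%:M); congr (_ + _).
  rewrite -!scaleNr -!scalerDl.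
  have -> : - c + (s + - (c * s * a)) = 0 by rewrite -[X in _ + (X + _)]c_eq; ring.
  by rewrite scale0r.
have uY' : Y + rank1 s u \in unitmx by case: (mulmx1_unit right_inv).
by have := mulKmx uY' (Z - c *: (Z *m u^T *m (u *m Z))); rewrite right_inv mulmx1.
Qed.

Lemma qform_inv_ge0 m (Y : 'M[R]_m) x : Y^T = Y -> posdef Y ->
  0 <= qform (invmx Y) x.
Proof.
move=> symY pdY; have uY := posdef_unit pdY.
have -> : qform (invmx Y) x = qform Y (x *m invmx Y).
  rewrite /qform trmx_mul trmx_inv symY !mulmxA.
  by rewrite -(mulmxA (x *m invmx Y)) mulmxV // mulmx1.
have [->|nz] := eqVneq (x *m invmx Y) 0; last exact/ltW/pdY.
by rewrite /qform !mul0mx mxE.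
Qed.

Lemma qform_inv_add_rank1 m (Y : 'M[R]_m) s u x : Y^T = Y -> posdef Y ->
  0 <= s -> qform (invmx (Y + rank1 s u)) x <= qform (invmx Y) x.
Proof.
move=> symY pdY s_ge0; have uY := posdef_unit pdY.
have denom_gt0 : 0 < 1 + s * qform (invmx Y) u.
  by rewrite ltr_pwDl ?mulr_ge0 ?qform_inv_ge0.
rewrite invmx_add_rank1 ?gt_eqF //; set M := _ *: _.
have -> : qform (invmx Y - M) x = qform (invmx Y) x - qform M x.
  by rewrite /qform mulmxBr mulmxBl !mxE.
rewrite gerDl oppr_le0 /M /qform -scalemxAr -scalemxAl mxE.
rewrite mulr_ge0 ?divr_ge0 ?(ltW denom_gt0) //.
have -> : x *m (invmx Y *m u^T *m (u *m invmx Y)) *m x^T =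
   (x *m invmx Y *m u^T) *m (u *m invmx Y *m x^T) by rewrite !mulmxA.
rewrite mx11_mulE -[X in _ * X]mx11_trE !trmx_mul !trmxK trmx_inv symY mulmxA.
by rewrite -expr2 sqr_ge0.
Qed.

Definition psd_sum m (r : seq (R * 'rV[R]_m)) : 'M[R]_m :=
  \sum_(p <- r) rank1 p.1 p.2.
Definition nonneg_coefs m (r : seq (R * 'rV[R]_m)) : bool :=
  all (fun p => 0 <= p.1) r.

Lemma psd_sum_cons m s (u : 'rV[R]_m) r :
  psd_sum ((s, u) :: r) = rank1 s u + psd_sum r.
Proof. by rewrite /psd_sum big_cons. Qed.

Lemma psd_sum_nil m : psd_sum (nil : seq (R * 'rV[R]_m)) = 0.
Proof. by rewrite /psd_sum big_nil. Qed.

Lemma add_psd_sum_cons m (Y : 'M[R]_m) s u r :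
  Y + psd_sum ((s, u) :: r) = (Y + psd_sum r) + rank1 s u.
Proof. by rewrite psd_sum_cons addrCA addrC. Qed.

Lemma sym_posdef_add_psd_sum m (Y : 'M[R]_m) r : Y^T = Y -> posdef Y ->
  nonneg_coefs r -> (Y + psd_sum r)^T = Y + psd_sum r /\ posdef (Y + psd_sum r).
Proof.
move=> symY pdY; elim: r => [|[s u] r IH] /=; first by rewrite psd_sum_nil addr0.
case/andP=> s_ge0 /IH [symYr pdYr]; rewrite add_psd_sum_cons; split.
  by rewrite linearD /= symYr /rank1 linearZ /= trmx_mul trmxK.
by apply: posdef_add_psd => // v; apply: qform_rank1_ge0.
Qed.

Lemma qform_inv_add_psd_sum m (Y : 'M[R]_m) r x : Y^T = Y -> posdef Y ->
  nonneg_coefs r -> qform (invmx (Y + psd_sum r)) x <= qform (invmx Y) x.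
Proof.
move=> symY pdY; elim: r => [|[s u] r IH] /=; first by rewrite psd_sum_nil addr0.
case/andP=> s_ge0 r_ge0; have [symYr pdYr] := sym_posdef_add_psd_sum symY pdY r_ge0.
by rewrite add_psd_sum_cons (le_trans _ (IH r_ge0)) ?qform_inv_add_rank1.
Qed.

Lemma det_add_psd_sum m (Y : 'M[R]_m) r : Y^T = Y -> posdef Y ->
  nonneg_coefs r -> \det Y <= \det (Y + psd_sum r).
Proof.
move=> symY pdY; elim: r => [|[s u] r IH] /=; first by rewrite psd_sum_nil addr0.
case/andP=> s_ge0 r_ge0; have [symYr pdYr] := sym_posdef_add_psd_sum symY pdY r_ge0.
rewrite add_psd_sum_cons det_add_rank1 ?posdef_unit // (le_trans (IH r_ge0)) //.
rewrite ler_peMr ?(ltW (posdef_det_gt0 pdYr)) //.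
by rewrite lerDl mulr_ge0 ?qform_inv_ge0.
Qed.

(* Induction on Q, each
   rank-one step multiplying both sides by 1 + s u (Y + ..)^-1 u^T, which is
   smaller on the left since the inverse form decreases. *)
Lemma det_add_psd_sum_submod m (Y : 'M[R]_m) rp rq : Y^T = Y -> posdef Y ->
  nonneg_coefs rp -> nonneg_coefs rq ->
  \det (Y + psd_sum rp + psd_sum rq) * \det Y <=
  \det (Y + psd_sum rp) * \det (Y + psd_sum rq).
Proof.
move=> symY pdY rp_ge0; elim: rq => [|[s u] r IH] /=.
  by rewrite !psd_sum_nil !addr0 mulrC.
case/andP=> s_ge0 r_ge0; have [symYr pdYr] := sym_posdef_add_psd_sum symY pdY r_ge0.
have [symYp pdYp] := sym_posdef_add_psd_sum symY pdY rp_ge0.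
have [symYpr pdYpr] := sym_posdef_add_psd_sum symYp pdYp r_ge0.
rewrite !add_psd_sum_cons !det_add_rank1 ?posdef_unit // mulrAC mulrA.
apply: ler_pM.
- by rewrite mulr_ge0 ?(ltW (posdef_det_gt0 pdY)) ?(ltW (posdef_det_gt0 pdYpr)).
- by rewrite addr_ge0 ?mulr_ge0 ?qform_inv_ge0.
- exact: IH.
- by rewrite lerD2l ler_wpM2l // addrAC qform_inv_add_psd_sum.
Qed.

End PositiveDefinite.

Section Kronecker.
Variable R : comPzRingType.

Lemma det_castmx N K (e : N = K) (M : 'M[R]_N) : \det (castmx (e, e) M) = \det M.
Proof. by case: K / e; rewrite castmx_id. Qed.

Lemma tens1_block n q (B : 'M[R]_q) :
  castmx (mulSn n q, mulSn n q) ((1%:M : 'M[R]_n.+1) *t B) =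
  block_mx B 0 0 ((1%:M : 'M[R]_n) *t B).
Proof.
have idx_l (k : 'I_q) : cast_ord (esym (mulSn n q)) (lshift (n * q) k)
    = mxtens_index (ord0, k) by apply: val_inj.
have idx_r (i : 'I_n) (k : 'I_q) :
    cast_ord (esym (mulSn n q)) (rshift q (mxtens_index (i, k)))
    = mxtens_index (lift ord0 i, k).
  by apply: val_inj => /=; rewrite /bump /= add1n mulSn addnA.
apply/matrixP=> a b; rewrite castmxE /=.
case: (split_ordP a) => [a' ->|t ->]; case: (split_ordP b) => [b' ->|t' ->].
- by rewrite block_mxEul !idx_l tensmxE !mxE eqxx mul1r.
- case: (mxtens_indexP t') => i k.
  by rewrite block_mxEur idx_l idx_r tensmxE !mxE mul0r.
- case: (mxtens_indexP t) => i k.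
  by rewrite block_mxEdl idx_l idx_r tensmxE !mxE mul0r.
- case: (mxtens_indexP t) => i k; case: (mxtens_indexP t') => j l.
  by rewrite block_mxEdr !idx_r !tensmxE !mxE (inj_eq lift_inj).
Qed.

Lemma det_1tens n q (B : 'M[R]_q) : \det ((1%:M : 'M[R]_n) *t B) = \det B ^+ n.
Proof.
elim: n => [|n IH]; first by rewrite expr0 det_mx00.
by rewrite -(det_castmx (mulSn n q)) tens1_block det_ublock IH exprS.
Qed.

(* A (x) 1_p is conjugate to 1_p (x) A by the permutation (i, k) |-> (k, i). *)
Lemma det_tens1 n p (A : 'M[R]_n) : \det (A *t (1%:M : 'M[R]_p)) = \det A ^+ p.
Proof.
pose swap (a : 'I_(n * p)) : 'I_(n * p) := cast_ord (mulnC p n)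
  (mxtens_index ((mxtens_unindex a).2, (mxtens_unindex a).1)).
have swap_inj : injective swap.
  move=> a b; case: (mxtens_indexP a) => i k; case: (mxtens_indexP b) => j l.
  rewrite /swap !mxtens_indexK /= => /cast_ord_inj.
  by move/(can_inj (@mxtens_indexK p n)) => -[-> ->].
pose s := perm swap_inj.
pose B := castmx (mulnC p n, mulnC p n) ((1%:M : 'M[R]_p) *t A).
have -> : A *t 1%:M = row_perm s (col_perm s B).
  apply/matrixP => a b; case: (mxtens_indexP a) => i k; case: (mxtens_indexP b) => j l.
  rewrite tensmxE !mxE !permE castmxE /swap !mxtens_indexK /= !cast_ordK.
  by rewrite tensmxE mxE mulrC.
rewrite row_permE col_permE !det_mulmx mulrCA -det_mulmx -perm_mxM mulgV.
by rewrite perm_mx1 det1 mulr1 det_castmx det_1tens.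
Qed.

End Kronecker.

Section ReducedLaplacian.
Variable R : realType.
Variables (n : nat) (U E : finType) (ends : E -> vtx n U * vtx n U) (w : E -> R).

(* The reduced incidence row of an edge: +1 at its first endpoint, -1 at its
   second, restricted to the local keyframes r_2, ..., r_(n+1) (r_1 is the
   grounded vertex whose row and column are deleted). *)
Definition incidence (T : pzRingType) (e : E) : 'rV[T]_n :=
  \row_i (((ends e).1 == inl (lift ord0 i))%:R - ((ends e).2 == inl (lift ord0 i))%:R).

Definition laplacian (T : comPzRingType) (c : E -> T) : 'M[T]_n :=
  \sum_e c e *: ((incidence T e)^T *m incidence T e).

Definition edge_weight (F : {set U}) (e : E) : R :=
  if in_locF F (ends e).1 && in_locF F (ends e).2 then w e else 0.

Lemma sum_pred1b (q : vtx n U) (b : bool) (P : pred (vtx n U)) (c : R) :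
  P =1 (fun y => (y == q) && b) -> \sum_(y | P y) c = if b then c else 0.
Proof.
move=> P_eq; rewrite (eq_bigl _ _ P_eq); case: b {P_eq}.
  by rewrite (big_pred1 q) // => y; rewrite andbT.
by rewrite big_pred0 // => y; rewrite andbF.
Qed.

Lemma diag_edge F (r : 'I_n.+1) (p q : vtx n U) (we : R) :
  \sum_(y | (y != inl r) && in_locF F y &&
     (((p == inl r) && (q == y)) || ((p == y) && (q == inl r)))) we
  = (if in_locF F p && in_locF F q then we else 0) *
    ((p == inl r)%:R - (q == inl r)%:R) ^+ 2.
Proof.
have [->|hp] := eqVneq p (inl r); have [->|hq] := eqVneq q (inl r).
- rewrite subrr expr0n /= mulr0 big_pred0 // => y.
  by case: (eqVneq y (inl r)) => [->|ny] /=; rewrite ?eqxx ?andbF ?andbT.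
- rewrite (@sum_pred1b q (in_locF F q)) /=; last first.
    move=> y /=; case: (eqVneq y q) => [->|nyq]; first by rewrite hq /= andbT.
    by rewrite !andbF /= ?andbF.
  by rewrite subr0 expr1n mulr1.
- rewrite (@sum_pred1b p (in_locF F p)) /=; last first.
    move=> y /=; case: (eqVneq y p) => [->|nyp]; first by rewrite hp !andbT.
    by rewrite /= !andbF.
  by rewrite andbT sub0r sqrrN expr1n mulr1.
- by rewrite subrr expr0n /= mulr0 big_pred0 // => y; rewrite /= !andbF.
Qed.

Lemma offdiag_edge F (r r' : 'I_n.+1) (p q : vtx n U) (we : R) : r != r' ->
  - (if ((p == inl r) && (q == inl r')) || ((p == inl r') && (q == inl r))
     then we else 0)
  = (if in_locF F p && in_locF F q then we else 0) *
    (((p == inl r)%:R - (q == inl r)%:R) * ((p == inl r')%:R - (q == inl r')%:R)).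
Proof.
move=> neq_rr'.
have neq1 : (inl r == inl r' :> vtx n U) = false by apply/negbTE.
have neq2 : (inl r' == inl r :> vtx n U) = false by rewrite eq_sym.
have [->|hp] := eqVneq p (inl r); have [->|hq] := eqVneq q (inl r);
  rewrite ?eqxx ?neq1 ?neq2 /=.
- by rewrite subrr mul0r mulr0 oppr0.
- have [->|hq'] := eqVneq q (inl r'); rewrite /= ?eqxx ?neq1 ?neq2; first by ring.
  by rewrite subrr !mulr0 oppr0.
- have [->|hp'] := eqVneq p (inl r'); rewrite /= ?eqxx ?neq1 ?neq2; first by ring.
  by rewrite subrr !mulr0 oppr0.
- by rewrite andbF subrr mul0r mulr0 oppr0.
Qed.

Lemma Lloc_tilde_laplacian F : Lloc_tilde ends w F = laplacian (edge_weight F).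
Proof.
apply/matrixP => i j; rewrite summxE !mxE.
under [RHS]eq_bigr do rewrite !mxE big_ord1 !mxE.
case: eqVneq => [eq_ij|neq_ij].
- have <- : i = j by apply: lift_inj eq_ij.
  rewrite /wsum (exchange_big_dep xpredT) //=.
  by apply: eq_bigr => e _; rewrite /joins diag_edge /edge_weight expr2.
- rewrite /wsum big_mkcond -sumrN; apply: eq_bigr => e _.
  by rewrite /joins (offdiag_edge F _ _ _ neq_ij).
Qed.

Definition edge_terms (c : E -> R) : seq (R * 'rV[R]_n) :=
  [seq (c e, incidence R e) | e <- enum E].

Lemma laplacian_psd_sum (c : E -> R) : laplacian c = psd_sum (edge_terms c).
Proof. by rewrite /psd_sum big_map big_enum. Qed.

Lemma edge_terms_nonneg (c : E -> R) :
  (forall e, 0 <= c e) -> nonneg_coefs (edge_terms c).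
Proof. by move=> c_ge0; rewrite /nonneg_coefs all_map; apply/allP => e _ /=. Qed.

Lemma laplacian_sym (c : E -> R) : (laplacian c)^T = laplacian c.
Proof.
rewrite linear_sum; apply: eq_bigr => e _.
by rewrite linearZ /= trmx_mul trmxK.
Qed.

Lemma laplacian_add (c d : E -> R) :
  laplacian (fun e => c e + d e) = laplacian c + laplacian d.
Proof. by rewrite -big_split; apply: eq_bigr => e _; rewrite scalerDl. Qed.

Lemma laplacian_ext (c d : E -> R) : c =1 d -> laplacian c = laplacian d.
Proof. by move=> eq_cd; apply: eq_bigr => e _; rewrite eq_cd. Qed.

Lemma laplacian_incr (c d : E -> R) :
  laplacian d = laplacian c + psd_sum (edge_terms (fun e => d e - c e)).
Proof.
rewrite -laplacian_psd_sum -laplacian_add.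
by apply: laplacian_ext => e; rewrite addrC subrK.
Qed.

Lemma qform_laplacian (c : E -> R) x :
  qform (laplacian c) x = \sum_e c e * ((x *m (incidence R e)^T) 0 0) ^+ 2.
Proof. by rewrite qform_sum; apply: eq_bigr => e _; rewrite qform_rank1. Qed.

(* Connectivity: a vector x of potentials on r_2, ..., r_(n+1), with r_1
   grounded at 0, that is constant along every local edge vanishes. *)
Definition local_edge (e : E) : bool := is_local (ends e).1 && is_local (ends e).2.

Definition potential (x : 'rV[R]_n) (a : 'I_n.+1) : R :=
  if unlift ord0 a is Some i then x 0 i else 0.

Lemma incidence_form e (x : 'rV[R]_n) a b : ends e = (inl a, inl b) ->
  (x *m (incidence R e)^T) 0 0 = potential x a - potential x b.
Proof.
have pot (c : 'I_n.+1) :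
    \sum_i x 0 i * (inl c == inl (lift ord0 i) :> vtx n U)%:R = potential x c.
  rewrite /potential; case: (unliftP ord0 c) => [i ->|->].
    rewrite (bigD1 i) //= eqxx mulr1 big1 ?addr0 // => j neq_ji.
    by rewrite (inj_eq (@inl_inj _ _)) (inj_eq lift_inj) eq_sym (negbTE neq_ji) mulr0.
  by apply: big1 => j _; rewrite (inj_eq (@inl_inj _ _)) (negbTE (neq_lift _ _)) mulr0.
move=> ends_e; rewrite mxE -!pot -sumrB; apply: eq_bigr => i _.
by rewrite !mxE ends_e /= mulrBr.
Qed.

Lemma connect_const (T : finType) (r : rel T) (f : T -> R) :
  (forall a b, r a b -> f a = f b) -> forall a b, connect r a b -> f a = f b.
Proof.
move=> f_r a b /connectP [p r_p ->]; elim: p a r_p => //= c p IH a /andP [r_ac r_p].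
by rewrite (f_r _ _ r_ac) IH.
Qed.

Lemma grounded_potential_eq0 (hconn : local_connected ends) (x : 'rV[R]_n) :
  (forall e, local_edge e -> (x *m (incidence R e)^T) 0 0 = 0) -> x = 0.
Proof.
move=> flat.
have pot_edge a b : [exists e, joins ends e (inl a) (inl b)] ->
    potential x a = potential x b.
  case/existsP=> e; rewrite /joins.
  case ends_e : (ends e) => [p q] /= /orP [] /andP [/eqP ep /eqP eq].
    have := flat e; rewrite /local_edge ends_e ep eq => /(_ isT).
    by rewrite (incidence_form _ (etrans ends_e (congr2 pair ep eq))) => /subr0_eq.
  have := flat e; rewrite /local_edge ends_e ep eq => /(_ isT).
  by rewrite (incidence_form _ (etrans ends_e (congr2 pair ep eq))) => /subr0_eq.
apply/rowP => i; rewrite mxE.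
have := connect_const pot_edge (hconn ord0 (lift ord0 i)).
by rewrite /potential liftK unlift_none.
Qed.

Definition local_weight (T : pzRingType) (e : E) : T := (local_edge e)%:R.

Lemma posdef_local_laplacian (hconn : local_connected ends) :
  posdef (laplacian (local_weight R)).
Proof.
have term_ge0 e (x : 'rV[R]_n) : 0 <= local_weight R e * ((x *m (incidence R e)^T) 0 0) ^+ 2.
  by rewrite mulr_ge0 ?ler0n ?sqr_ge0.
move=> x x_neq0; rewrite qform_laplacian lt_def sumr_ge0 ?andbT //.
apply: contra x_neq0 => /eqP sum0; apply/eqP/grounded_potential_eq0 => // e loc_e.
have := psumr_eq0P (fun e _ => term_ge0 e x) sum0; move/(_ e isT).
by rewrite /local_weight loc_e mul1r => /eqP; rewrite sqrf_eq0 => /eqP.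
Qed.

(* Its determinant is a positive integer. *)
Lemma det_local_laplacian_ge1 (hconn : local_connected ends) :
  1 <= \det (laplacian (local_weight R)).
Proof.
have int_lapl : map_mx intr (laplacian (local_weight int)) = laplacian (local_weight R).
  rewrite map_mx_sum; apply: eq_bigr => e _.
  rewrite map_mxZ map_mxM -map_trmx rmorph_nat.
  suff -> : map_mx intr (incidence int e) = incidence R e by [].
  by apply/rowP => i; rewrite !mxE rmorphB !rmorph_nat.
have := posdef_det_gt0 (posdef_local_laplacian hconn).
by rewrite -int_lapl det_map_mx ltr0z ler1z gtz0_ge1.
Qed.

End ReducedLaplacian.

Section KeyframeGraph.
Variable R : realType.
Variables (n : nat) (U E : finType) (ends : E -> vtx n U * vtx n U) (w : E -> R).
Hypothesis w_ge1 : forall e : E, 1 <= w e.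
Hypothesis no_user_edge : forall e : E, is_local (ends e).1 || is_local (ends e).2.
Hypothesis hconn : local_connected ends.

Local Notation kappa := (edge_weight ends w).
Local Notation Lt := (Lloc_tilde ends w).

Lemma local_weight_le F e : local_weight ends R e <= kappa F e.
Proof.
have w_ge0 := le_trans ler01 (w_ge1 e).
rewrite /local_weight /local_edge /edge_weight.
by case: (ends e) => [[p|p] [q|q]] /=; rewrite ?w_ge1 ?ler0n //; case: ifP.
Qed.

Lemma edge_weight_mono (A B : {set U}) e : A \subset B -> kappa A e <= kappa B e.
Proof.
move=> sAB; have in_locF_mono v : in_locF A v -> in_locF B v.
  by case: v => //= u; apply: (subsetP sAB).
rewrite /edge_weight; case: ifP => [/andP [inA1 inA2]|_].
  by rewrite !in_locF_mono.
by case: ifP; rewrite // (le_trans ler01).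
Qed.

(* Since no edge joins two user keyframes, an edge weight depends on F
   through at most one membership test, hence is modular in F. *)
Lemma edge_weight_modular (A B : {set U}) e :
  kappa (A :|: B) e + kappa (A :&: B) e = kappa A e + kappa B e.
Proof.
have := no_user_edge e; rewrite /edge_weight.
case: (ends e) => [[p|p] [q|q]] //= _; rewrite ?inE //.
- by case: (q \in A); case: (q \in B); rewrite /= ?addr0 ?add0r.
- by case: (p \in A); case: (p \in B); rewrite /= ?addr0 ?add0r.
Qed.

(* L_F is the positive definite local Laplacian plus a positive
   semidefinite rank-one sum. *)
Lemma Lloc_sym_posdef F : (Lt F)^T = Lt F /\ posdef (Lt F).
Proof.
rewrite Lloc_tilde_laplacian (laplacian_incr ends (local_weight ends R)).
apply: sym_posdef_add_psd_sum; first exact: laplacian_sym.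
  exact: posdef_local_laplacian.
by apply: edge_terms_nonneg => e; rewrite subr_ge0 local_weight_le.
Qed.

(* d(F) >= det of the local Laplacian >= 1. *)
Lemma det_Lloc_ge1 F : 1 <= \det (Lt F).
Proof.
apply: le_trans (det_local_laplacian_ge1 R hconn) _.
rewrite Lloc_tilde_laplacian (laplacian_incr ends (local_weight ends R) (kappa F)).
apply: det_add_psd_sum; first exact: laplacian_sym.
  exact: posdef_local_laplacian.
by apply: edge_terms_nonneg => e; rewrite subr_ge0 local_weight_le.
Qed.

(* d is monotone: L_B = L_A + (PSD rank-one sum) when A <= B. *)
Lemma det_Lloc_mono (A B : {set U}) : A \subset B -> \det (Lt A) <= \det (Lt B).
Proof.
move=> sAB; have [symA pdA] := Lloc_sym_posdef A.
rewrite [Lt B]Lloc_tilde_laplacian (laplacian_incr ends (kappa A)) -Lloc_tilde_laplacian.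
apply: det_add_psd_sum => //.
by apply: edge_terms_nonneg => e; rewrite subr_ge0 edge_weight_mono.
Qed.

(* d is log-submodular, by modularity of the edge weights. *)
Lemma det_Lloc_submod (A B : {set U}) :
  \det (Lt (A :|: B)) * \det (Lt (A :&: B)) <= \det (Lt A) * \det (Lt B).
Proof.
have [symAB pdAB] := Lloc_sym_posdef (A :&: B).
have incr_ge0 (C : {set U}) : A :&: B \subset C ->
    nonneg_coefs (edge_terms ends (fun e => kappa C e - kappa (A :&: B) e)).
  by move=> sC; apply: edge_terms_nonneg => e; rewrite subr_ge0 edge_weight_mono.
have -> : Lt (A :|: B) = Lt (A :&: B)
    + psd_sum (edge_terms ends (fun e => kappa A e - kappa (A :&: B) e))
    + psd_sum (edge_terms ends (fun e => kappa B e - kappa (A :&: B) e)).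
  rewrite !Lloc_tilde_laplacian -!laplacian_psd_sum -!laplacian_add.
  by apply: laplacian_ext => e; have := edge_weight_modular A B e; lra.
rewrite [Lt A]Lloc_tilde_laplacian [Lt B]Lloc_tilde_laplacian.
rewrite (laplacian_incr ends (kappa (A :&: B)) (kappa A)).
rewrite (laplacian_incr ends (kappa (A :&: B)) (kappa B)) -Lloc_tilde_laplacian.
by apply: det_add_psd_sum_submod; rewrite ?incr_ge0 ?subsetIl ?subsetIr.
Qed.

(* det (L (x) I) = det (L (x) 1) det (1 (x) I) = det(L)^6 det(I)^n. *)
Lemma gfun_det (I : 'M[R]_6) F :
  gfun ends w I F = ln (\det (Lt F) ^+ 6 * \det I ^+ n).
Proof. by rewrite /gfun /Iloc_tilde tensmx_decr det_mulmx det_tens1 det_1tens. Qed.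

End KeyframeGraph.

Theorem lemma5 (R : realType) (n : nat) (U E : finType)
  (ends : E -> vtx n U * vtx n U) (w : E -> R) (I : 'M[R]_6)
  (hw : forall e : E, 1 <= w e)
  (hnouser : forall e : E, is_local (ends e).1 || is_local (ends e).2)
  (hconn : local_connected ends)
  (hI : sym_posdef I) (hdet : 1 <= \det I) :
  nonneg_fun (gfun ends w I) /\ monotone_nondecr (gfun ends w I)
  /\ submodular (gfun ends w I).
Proof.
(* Only det I >= 1 enters. *)
have d_ge1 F : 1 <= \det (Lloc_tilde ends w F) := det_Lloc_ge1 hw hconn F.
have d_gt0 F : 0 < \det (Lloc_tilde ends w F) := lt_le_trans ltr01 (d_ge1 F).
have detI_gt0 : 0 < \det I := lt_le_trans ltr01 hdet.
have arg_gt0 F : 0 < \det (Lloc_tilde ends w F) ^+ 6 * \det I ^+ n.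
  exact: mulr_gt0 (exprn_gt0 _ (d_gt0 F)) (exprn_gt0 _ detI_gt0).
split; [|split].
- by move=> F; rewrite gfun_det; apply/ln_ge0/mulr_ege1; rewrite ?exprn_ege1.
- move=> A B sAB; rewrite !gfun_det ler_ln ?posrE // ler_pM2r ?exprn_gt0 //.
  by apply: lerXn2r; rewrite ?nnegrE ?(ltW (d_gt0 _)) ?(det_Lloc_mono hw hconn sAB).
- move=> A B; rewrite !gfun_det -!lnM ?posrE //.
  rewrite ler_ln ?posrE ?(mulr_gt0 (arg_gt0 _) (arg_gt0 _)) //.
  rewrite mulrACA [leRHS]mulrACA ler_pM2r ?mulr_gt0 ?exprn_gt0 // -!exprMn.
  apply: lerXn2r; rewrite ?nnegrE ?mulr_ge0 ?(ltW (d_gt0 _)) //.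
  exact: det_Lloc_submod.
Qed.
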